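(* For every DBI normal formula $\varphi$ and every pointed Kripke model $(\mathcal{M},v)$, the pointed update of $(\mathcal{M},v)$ with $(\mathcal{U}_\varphi,0)$ is defined and $\bigl(\mathcal{M}\odot\mathcal{U}_\varphi,(v,0)\bigr)$ is weakly privatized with respect to $\varphi$.
   Context: Agents $\mathcal{A}=\{1,\dots,n\}$, $n>1$; language $\mathcal{L}$: $\varphi ::= p \mid \neg\varphi \mid (\varphi\wedge\varphi)\mid B_i\varphi$, $\top$ the usual tautology. Kripke model $\mathcal{M}=\langle S,R,V\rangle$ (nonempty $S$, $R_i\subseteq S\times S$, $V:\mathit{Prop}\to 2^S$), standard truth. Action model $\mathcal{U}=\langle E,Q,\mathsf{pre}\rangle$ (nonempty $E$, $Q_i\subseteq E\times E$, $\mathsf{pre}:E\to\mathcal{L}$). Frame properties apply to models via their underlying frames. Pointed update of $(\mathcal{M},w)$ with $(\mathcal{U},\alpha)$, defined iff $\mathcal{M},w\vDash\mathsf{pre}(\alpha)$: with $T=\{(x,\beta)\in S\times E\mid\mathcal{M},x\vDash\mathsf{pre}(\beta)\}$, $\mathcal{M}\odot\mathcal{U}=\langle S^{\mathcal U},R^{\mathcal U},V^{\mathcal U}\rangle$ where $S^{\mathcal U}$ is the smallest subset of $T$ containing $(w,\alpha)$ closed under: $(x,\beta)\in S^{\mathcal U}$, $(u,\gamma)\in T$, $xR_iu$, $\beta Q_i\gamma$ imply $(u,\gamma)\in S^{\mathcal U}$; $R^{\mathcal U}_i$ relates $(x,\beta),(u,\gamma)\in S^{\mathcal U}$ iff $xR_iu$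 and $\beta Q_i\gamma$; $V^{\mathcal U}(p)=\{(x,\beta)\in S^{\mathcal U}\mid x\in V(p)\}$. Target agents: $\mathsf{ta}(p)=\varnothing$, $\mathsf{ta}(\neg\phi)=\mathsf{ta}(\phi)$, $\mathsf{ta}(\phi\wedge\psi)=\mathsf{ta}(\phi)\cup\mathsf{ta}(\psi)$, $\mathsf{ta}(B_i\phi)=\{i\}$. DBI formulas: $\varphi ::= B_i\xi \mid B_i(\xi\wedge\varphi)\mid(\varphi\wedge\varphi)\mid B_i\varphi$, $\xi$ purely propositional. DBI normal: $B_i\xi$ always; $B_i\varphi$, $B_i(\xi\wedge\varphi)$ iff $\varphi$ DBI normal and $i\notin\mathsf{ta}(\varphi)$; $\varphi\wedge\psi$ iff both DBI normal and $\mathsf{ta}(\varphi)\cap\mathsf{ta}(\psi)=\varnothing$. Action model $\mathcal{U}_\varphi=\langle E^\varphi,Q^\varphi,\mathsf{pre}^\varphi\rangle$ for DBI normal $\varphi$, recursively; always $E^\varphi=\{0,-1\}\sqcup D^\varphi$, $\varnothing\ne D^\varphi\subseteq\{1,2,\dots\}$, $\mathsf{pre}^\varphi(0)=\mathsf{pre}^\varphi(-1)=\top$; $\underline{Q}_j:=Q_j\cap((E\setminus\{0\})\times(E\setminus\{0\}))$. (1) $\varphi=B_i\xi$: $D=\{m\}$, $\mathsf{pre}(m)=\xi$, $Q_j=\{(0,-1),(m,-1),(-1,-1)\}$ ($j\ne i$), $Q_i=\{(0,m),(m,m),(-1,-1)\}$. (2) $\varphi=B_i\psi$: fresh $m\ge1$,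 $m\notin D^\psi$; $D^\varphi=D^\psi\sqcup\{m\}$; $\mathsf{pre}^\varphi$ extends $\mathsf{pre}^\psi$ with $\mathsf{pre}^\varphi(m)=\top$; $Q^\varphi_j=\underline{Q}^\psi_j\cup\{(0,-1)\}\cup\{(m,k)\mid(0,k)\in Q^\psi_j\}$ ($j\ne i$); $Q^\varphi_i=\underline{Q}^\psi_i\cup\{(0,m),(m,m)\}$. (3) $\varphi=B_i(\xi\wedge\psi)$: as (2) but $\mathsf{pre}^\varphi(m)=\xi$. (4) $\varphi=\psi\wedge\theta$: with $D^\psi\cap D^\theta=\varnothing$, $D^\varphi=D^\psi\sqcup D^\theta$, $\mathsf{pre}^\varphi=\mathsf{pre}^\psi\cup\mathsf{pre}^\theta$, $Q^\varphi_j=\underline{Q}^\psi_j\cup\underline{Q}^\theta_j\cup\{(0,k)\mid(0,k)\in Q^\psi_j\cup Q^\theta_j, k\in D^\psi\sqcup D^\theta\}\cup\{(0,-1)\mid\text{no such }k\text{ exists}\}$. Modal syntactic tree $\mathcal{T}_\varphi$: $\mathcal{T}_{B_i\xi}$ is a root with one child labeled $B_i$; $\mathcal{T}_{B_i\psi}=\mathcal{T}_{B_i(\xi\wedge\psi)}$ is obtained by labeling the root of $\mathcal{T}_\psi$ with $B_i$ and making it the only child of a new unlabeled root; $\mathcal{T}_{\psi\wedge\theta}$ is the disjoint union of $\mathcal{T}_\psi,\mathcal{T}_\theta$ with roots identified. $RootP(\varphi)$: paths from the root (length $\ge0$); $\mathsf{agSeq}(\sigma)$: agents labeling the non-root nodes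 of $\sigma$, in order. Clusters: for a frame $\mathcal{F}=\langle W,R\rangle$, $w\in W$, $C^{i_1,\dots,i_l}_{\mathcal{F},w}=\{u\mid\exists u_2,\dots,u_l:\ wR_{i_1}u_2\cdots u_lR_{i_l}u\}$, $C^\varepsilon_{\mathcal{F},w}=\{w\}$. $\mathcal{A}^l_{\mathrm{nsr}}$: agent sequences of length $l$ without two successive equal agents. $(\mathcal{F},w)$ is weakly privatized w.r.t. $\varphi$ iff for every $\sigma\in RootP(\varphi)$ and every $s\in\bigcup_{l\ge0}\mathcal{A}^l_{\mathrm{nsr}}\setminus\{\mathsf{agSeq}(\sigma)\}$, $C^{\mathsf{agSeq}(\sigma)}_{\mathcal{F},w}\cap C^s_{\mathcal{F},w}=\varnothing$. *)

From HB Require Import structures.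
From mathcomp Require Import all_boot.
From Stdlib Require Import ZArith.
Set Warnings "-notation-overridden".

Unset Implicit Arguments.
Unset Strict Implicit.
Unset Printing Implicit Defensive.

(* Agents are 'I_n (standing for {1,...,n}); propositional atoms are nat. *)
Inductive form (n : nat) : Type :=
| Atom of nat
| Neg of form n
| And of form n & form n
| Bel of 'I_n & form n.

Arguments Atom {n} _.
Arguments Neg {n} _.
Arguments And {n} _ _.
Arguments Bel {n} _ _.

Section Defs.
Variable n : nat.

Definition top : form n := Neg (And (Atom 0) (Neg (Atom 0))).

Fixpoint propb (f : form n) : bool :=
  match f with
  | Atom _ => true
  | Neg a => propb a
  | And a b => propb a && propb b
  | Bel _ _ => false
  end.

Fixpoint ta (f : form n) : {set 'I_n} :=
  match f with
  | Atom _ => set0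
  | Neg a => ta a
  | And a b => ta a :|: ta b
  | Bel i _ => [set i]
  end.

Inductive DBI : form n -> Prop :=
| DBI_B i xi : propb xi -> DBI (Bel i xi)
| DBI_Bc i xi f : propb xi -> DBI f -> DBI (Bel i (And xi f))
| DBI_and f g : DBI f -> DBI g -> DBI (And f g)
| DBI_Bd i f : DBI f -> DBI (Bel i f).

Inductive DBI_normal : form n -> Prop :=
| N_B i xi : propb xi -> DBI_normal (Bel i xi)
| N_Bc i xi f : propb xi -> DBI_normal f -> i \notin ta f ->
    DBI_normal (Bel i (And xi f))
| N_and f g : DBI_normal f -> DBI_normal g -> [disjoint ta f & ta g] ->
    DBI_normal (And f g)
| N_Bd i f : DBI_normal f -> i \notin ta f -> DBI_normal (Bel i f).

Record kmodel := KModel {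
  St : Type;
  Rel : 'I_n -> St -> St -> Prop;
  Val : nat -> St -> Prop }.

Fixpoint sat (M : kmodel) (w : St M) (f : form n) : Prop :=
  match f with
  | Atom p => @Val M p w
  | Neg a => ~ sat M w a
  | And a b => sat M w a /\ sat M w b
  | Bel i a => forall u, @Rel M i w u -> sat M u a
  end.

Record amodel := AModel {
  aE : Z -> Prop;
  aQ : 'I_n -> Z -> Z -> Prop;
  apre : Z -> form n }.

Definition upd_defined (M : kmodel) (U : amodel) (w : St M) (a : Z) : Prop :=
  aE U a /\ sat M w (apre U a).

Inductive upd_reach (M : kmodel) (U : amodel) (w : St M) (a : Z)
  : St M -> Z -> Prop :=
| ur_base : aE U a -> sat M w (apre U a) -> upd_reach M U w a w a
| ur_step x b u c i :
    upd_reach M U w a x b -> @Rel M i x u -> aQ U i b c ->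
    aE U c -> sat M u (apre U c) -> upd_reach M U w a u c.

Definition upd_model (M : kmodel) (U : amodel) (w : St M) (a : Z) : kmodel :=
  {| St := {p : St M * Z | upd_reach M U w a p.1 p.2};
     Rel := fun i p q => @Rel M i (proj1_sig p).1 (proj1_sig q).1 /\ aQ U i (proj1_sig p).2 (proj1_sig q).2;
     Val := fun x p => @Val M x (proj1_sig p).1 |}.

Definition upd_point (M : kmodel) (U : amodel) (w : St M) (a : Z)
  (H : upd_defined M U w a) : St (upd_model M U w a) :=
  exist _ (w, a) (ur_base M U w a (proj1 H) (proj2 H)).

Definition Umodel (D : Z -> Prop) (Q : 'I_n -> Z -> Z -> Prop) (pre : Z -> form n)
  : amodel := {| aE := fun e => e = 0%Z \/ e = (-1)%Z \/ D e; aQ := Q; apre := pre |}.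

Definition underQ (Q : 'I_n -> Z -> Z -> Prop) (j : 'I_n) (e f : Z) : Prop :=
  Q j e f /\ e <> 0%Z /\ f <> 0%Z.

(* IsU phi D Q pre : <E,Q,pre> with E = {0,-1} + D is a (the, up to the
   choice of fresh labels) action model U_phi built by clauses (1)-(4). *)
Inductive IsU : form n -> (Z -> Prop) -> ('I_n -> Z -> Z -> Prop) ->
                (Z -> form n) -> Prop :=
| U_B (i : 'I_n) xi (m : Z) D Q pre :
    propb xi -> (1 <= m)%Z ->
    (forall e, D e <-> e = m) ->
    pre 0%Z = top -> pre (-1)%Z = top -> pre m = xi ->
    (forall j e f, j != i ->
       (Q j e f <-> (e = 0%Z /\ f = (-1)%Z) \/ (e = m /\ f = (-1)%Z)
                    \/ (e = (-1)%Z /\ f = (-1)%Z))) ->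
    (forall e f, Q i e f <-> (e = 0%Z /\ f = m) \/ (e = m /\ f = m)
                    \/ (e = (-1)%Z /\ f = (-1)%Z)) ->
    IsU (Bel i xi) D Q pre
| U_Bd (i : 'I_n) psi (m : Z) Dp Qp prep D Q pre :
    IsU psi Dp Qp prep -> (1 <= m)%Z -> ~ Dp m ->
    (forall e, D e <-> Dp e \/ e = m) ->
    pre 0%Z = top -> pre (-1)%Z = top -> pre m = top ->
    (forall e, Dp e -> pre e = prep e) ->
    (forall j e f, j != i ->
       (Q j e f <-> underQ Qp j e f \/ (e = 0%Z /\ f = (-1)%Z)
                    \/ (e = m /\ Qp j 0%Z f))) ->
    (forall e f, Q i e f <-> underQ Qp i e f \/ (e = 0%Z /\ f = m)
                    \/ (e = m /\ f = m)) ->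
    IsU (Bel i psi) D Q pre
| U_Bc (i : 'I_n) xi psi (m : Z) Dp Qp prep D Q pre :
    propb xi ->
    IsU psi Dp Qp prep -> (1 <= m)%Z -> ~ Dp m ->
    (forall e, D e <-> Dp e \/ e = m) ->
    pre 0%Z = top -> pre (-1)%Z = top -> pre m = xi ->
    (forall e, Dp e -> pre e = prep e) ->
    (forall j e f, j != i ->
       (Q j e f <-> underQ Qp j e f \/ (e = 0%Z /\ f = (-1)%Z)
                    \/ (e = m /\ Qp j 0%Z f))) ->
    (forall e f, Q i e f <-> underQ Qp i e f \/ (e = 0%Z /\ f = m)
                    \/ (e = m /\ f = m)) ->
    IsU (Bel i (And xi psi)) D Q pre
| U_And psi theta Dp Qp prep Dt Qt pret D Q pre :
    IsU psi Dp Qp prep -> IsU theta Dt Qt pret ->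
    (forall e, ~ (Dp e /\ Dt e)) ->
    (forall e, D e <-> Dp e \/ Dt e) ->
    pre 0%Z = top -> pre (-1)%Z = top ->
    (forall e, Dp e -> pre e = prep e) ->
    (forall e, Dt e -> pre e = pret e) ->
    (forall j e f,
       Q j e f <->
         underQ Qp j e f \/ underQ Qt j e f
         \/ (e = 0%Z /\ (Qp j 0%Z f \/ Qt j 0%Z f) /\ (Dp f \/ Dt f))
         \/ (e = 0%Z /\ f = (-1)%Z /\
             ~ (exists k, (Qp j 0%Z k \/ Qt j 0%Z k) /\ (Dp k \/ Dt k)))) ->
    IsU (And psi theta) D Q pre.

(* agent sequences agSeq(sigma) of the root paths sigma of the modal
   syntactic tree T_phi *)
Inductive rootPath : form n -> seq 'I_n -> Prop :=
| rp_root f : rootPath f [::]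
| rp_Bprop i xi : propb xi -> rootPath (Bel i xi) [:: i]
| rp_Bd i f s : DBI f -> rootPath f s -> rootPath (Bel i f) (i :: s)
| rp_Bc i xi f s : propb xi -> DBI f -> rootPath f s ->
    rootPath (Bel i (And xi f)) (i :: s)
| rp_andl f g s : rootPath f s -> rootPath (And f g) s
| rp_andr f g s : rootPath g s -> rootPath (And f g) s.

Fixpoint cluster (S : Type) (R : 'I_n -> S -> S -> Prop) (w : S)
  (s : seq 'I_n) (u : S) : Prop :=
  match s with
  | [::] => u = w
  | i :: s' => exists u2, R i w u2 /\ cluster S R u2 s' u
  end.

Definition nsr (s : seq 'I_n) : bool := sorted (fun a b : 'I_n => a != b) s.

Definition weakly_privatized (M : kmodel) (w : St M) (f : form n) : Prop :=
  forall sigma s, rootPath f sigma -> nsr s -> s <> sigma ->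
    forall u, ~ (cluster (St M) (@Rel M) w sigma u /\ cluster (St M) (@Rel M) w s u).

End Defs.

Arguments top {n}.
Arguments propb {n}.
Arguments ta {n}.
Arguments DBI {n}.
Arguments DBI_normal {n}.
Arguments St {n}.
Arguments Rel {n}.
Arguments Val {n}.
Arguments sat {n}.
Arguments aE {n}.
Arguments aQ {n}.
Arguments apre {n}.
Arguments upd_defined {n}.
Arguments upd_reach {n}.
Arguments upd_model {n}.
Arguments upd_point {n}.
Arguments Umodel {n}.
Arguments underQ {n}.
Arguments IsU {n}.
Arguments rootPath {n}.
Arguments cluster {n}.
Arguments nsr {n}.
Arguments weakly_privatized {n}.

From HB Require Import structures.
From mathcomp Require Import all_boot.
From Stdlib Require Import ZArith Lia.
Set Warnings "-notation-overridden".

(* U_phi is a copy of the modal syntactic tree of phi: event 0 is the root,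
   the events of D are the other nodes, and -1 is a sink receiving every move
   that leaves the tree.  A cluster of the update projects onto a cluster of
   U_phi starting at 0, so it suffices to show two facts about U_phi: the
   agent sequence of a root path leads into D, and a sequence without two
   successive equal agents that leads into D is determined by its endpoint.
   Both are proved by induction on the construction of U_phi; the side
   conditions of DBI normality ensure that a root path never follows the
   reflexive loop of a node and never crosses into the subtree of the other
   conjunct. *)

Section Clusters.
Context {n : nat}.
Local Set Implicit Arguments.
Local Unset Strict Implicit.

Lemma cluster_transfer (S : Type) (R R' : 'I_n -> S -> S -> Prop) (W : S -> Prop) :
  (forall j x y, W x -> R j x y -> R' j x y /\ W y) ->
  forall s x y, W x -> cluster S R x s y -> cluster S R' x s y /\ W y.
Proof.
move=> RR'; elim=> [|j s IH] x y Wx /=; first by move=> ->.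
case=> u [Ru C]; have [R'u Wu] := RR' _ _ _ Wx Ru.
by have [C' Wy] := IH _ _ Wu C; split=> //; exists u.
Qed.

Lemma cluster_sink (S : Type) (R : 'I_n -> S -> S -> Prop) (x : S) :
  (forall j y, R j x y -> y = x) -> forall s y, cluster S R x s y -> y = x.
Proof.
by move=> Rx; elim=> [|j s IH] y //= [u [/Rx -> /IH]].
Qed.

Lemma cluster_upd_model (M : kmodel n) (U : amodel n) w a s
    (x y : St (upd_model M U w a)) :
  cluster _ (Rel (upd_model M U w a)) x s y ->
  cluster Z (aQ U) (proj1_sig x).2 s (proj1_sig y).2.
Proof.
elim: s x => [|j s IH] x /=; first by move=> ->.
by case=> u [[_ Qu] /IH C]; exists (proj1_sig u).2.
Qed.

End Clusters.

Section Privatizing.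
Context {n : nat}.
Local Set Implicit Arguments.
Local Unset Strict Implicit.
Local Open Scope Z_scope.

Definition world (D : Z -> Prop) (e : Z) : Prop := e = -1 \/ D e.

(* (D, Q) stands for an action model with events {0, -1} + D, P for the agent
   sequences of the root paths and T for the target agents of a formula. *)
Record privatizing (P : seq 'I_n -> Prop) (T : {set 'I_n}) (D : Z -> Prop)
    (Q : 'I_n -> Z -> Z -> Prop) : Prop := Privatizing {
  event_pos : forall e, D e -> 0 < e;
  sink_step : forall j f, Q j (-1) f <-> f = -1;
  step_src : forall j e f, Q j e f -> e = 0 \/ world D e;
  step_tgt : forall j e f, Q j e f -> world D f;
  init_agent : forall j f, Q j 0 f -> D f -> j \in T;
  path_agent : forall j s, P (j :: s) -> j \in T;
  path_init : forall j s, P (j :: s) -> exists2 k, Q j 0 k & D k;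
  path_nsr : forall s, P s -> nsr s;
  path_reach : forall j s e, P (j :: s) -> cluster Z Q 0 (j :: s) e -> D e;
  nsr_unique : forall s t e, nsr s -> nsr t ->
    cluster Z Q 0 s e -> cluster Z Q 0 t e -> D e -> s = t }.

Lemma privatizing_mono P P' T D Q :
  privatizing P T D Q -> (forall s, P' s -> P s) -> privatizing P' T D Q.
Proof.
case=> *; constructor; eauto.
Qed.

Section Basics.
Variables (P : seq 'I_n -> Prop) (T : {set 'I_n}) (D : Z -> Prop).
Variables (Q : 'I_n -> Z -> Z -> Prop).
Hypothesis PQ : privatizing P T D Q.

Lemma world_neq0 e : world D e -> e <> 0.
Proof. by case=> [|/(event_pos PQ)]; lia. Qed.

Lemma cluster_cons_world x j s e : cluster Z Q x (j :: s) e -> world D e.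
Proof.
elim: s x j => [|k s IH] x j /= [u [Qu C]]; last exact: IH C.
by rewrite C; apply: (step_tgt PQ Qu).
Qed.

Lemma privatizing_cluster_eq sigma s e : P sigma -> nsr s ->
  cluster Z Q 0 sigma e -> cluster Z Q 0 s e -> s = sigma.
Proof.
case: sigma => [|j sigma] Psigma Hs C1 C2.
  case: s Hs C2 => [//|k s] _ /cluster_cons_world /world_neq0.
  by rewrite /= in C1.
apply: (nsr_unique PQ) C2 C1 (path_reach PQ Psigma C1) => //.
exact: (path_nsr PQ Psigma).
Qed.

End Basics.

(* The action model of a propositional formula: U_(B_i xi) is the belief step
   below applied to it. *)
Definition null_step (j : 'I_n) (e f : Z) : Prop := (e = 0 \/ e = -1) /\ f = -1.

Lemma privatizing_null :
  privatizing (fun s => s = [::]) set0 (fun _ => False) null_step.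
Proof.
constructor=> //; rewrite /null_step /world; try by move=> *; lia.
by move=> s ->.
Qed.

Definition bel_paths (i : 'I_n) (P : seq 'I_n -> Prop) (s : seq 'I_n) : Prop :=
  if s is j :: s' then j = i /\ P s' else True.

Section BelStep.
Variables (P : seq 'I_n -> Prop) (T : {set 'I_n}) (Dp : Z -> Prop).
Variables (Qp : 'I_n -> Z -> Z -> Prop) (i : 'I_n) (m : Z).
Variables (D : Z -> Prop) (Q : 'I_n -> Z -> Z -> Prop).
Hypotheses (PQp : privatizing P T Dp Qp) (iT : i \notin T).
Hypotheses (m_pos : 1 <= m) (Dp_m : ~ Dp m) (D_spec : forall e, D e <-> Dp e \/ e = m).
Hypothesis Q_spec : forall j e f, j != i ->
  (Q j e f <-> underQ Qp j e f \/ (e = 0 /\ f = -1) \/ (e = m /\ Qp j 0 f)).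
Hypothesis Qi_spec : forall e f,
  Q i e f <-> underQ Qp i e f \/ (e = 0 /\ f = m) \/ (e = m /\ f = m).

Lemma bel_step_cases j e f : Q j e f ->
  underQ Qp j e f \/ (e = 0 /\ (f = -1 \/ f = m)) \/ (e = m /\ (f = m \/ Qp j 0 f)).
Proof.
by case: (eqVneq j i) => [->|ji]; [rewrite Qi_spec | rewrite Q_spec]; tauto.
Qed.

Lemma bel_init_step j f : Q j 0 f -> (j = i /\ f = m) \/ (j != i /\ f = -1).
Proof.
case: (eqVneq j i) => [->|ji]; [rewrite Qi_spec | rewrite Q_spec //];
  move=> -[[_ [/(_ erefl) //]]|[[_ ->]|[m0 _]]]; by [left | right | lia].
Qed.

Lemma bel_m_step j f : j != i -> Q j m f -> Qp j 0 f.
Proof.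
move=> ji; rewrite Q_spec // => -[[/(step_src PQp) Hm _]|[[m0 _]|[_ //]]].
- by case: Hm => [|[|//]]; lia.
- lia.
Qed.

Lemma bel_sink j f : Q j (-1) f <-> f = -1.
Proof.
split; first by case/bel_step_cases=> [[/(sink_step PQp)]|]; lia.
move=> ->; case: (eqVneq j i) => [->|ji]; [rewrite Qi_spec | rewrite Q_spec //];
  by left; split; [apply/(sink_step PQp) | lia].
Qed.

Lemma bel_world_step j y g : world Dp y -> Q j y g -> Qp j y g /\ world Dp g.
Proof.
move=> Wy /bel_step_cases [[Qy _]|[[y0 _]|[ym _]]].
- by split; last exact: (step_tgt PQp Qy).
- by case: (world_neq0 PQp Wy).
- by move: Wy; rewrite ym => -[|/Dp_m //]; lia.
Qed.

Lemma bel_cluster_from_m k s e : k != i -> cluster Z Q m (k :: s) e ->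
  cluster Z Qp 0 (k :: s) e /\ world Dp e.
Proof.
move=> ki [f [/(bel_m_step ki) Qf C]].
have [C' We] := cluster_transfer bel_world_step (step_tgt PQp Qf) C.
by split=> //; exists f.
Qed.

Lemma bel_sink_cluster s e : cluster Z Q (-1) s e -> e = -1.
Proof. by apply: cluster_sink => j f /bel_sink. Qed.

Lemma bel_D_pos e : D e -> 0 < e.
Proof. by case/D_spec=> [/(event_pos PQp)|]; lia. Qed.

Lemma bel_cluster_nsr j s e : nsr (j :: s) -> cluster Z Q 0 (j :: s) e -> D e ->
  j = i /\ (s = [::] /\ e = m \/ cluster Z Qp 0 s e /\ Dp e).
Proof.
move=> Hs [f [Qf C]] De.
case: (bel_init_step Qf) => [[Ej Ef]|[_ Ef]]; subst f; last first.
  by move: (bel_D_pos De); rewrite (bel_sink_cluster C); lia.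
subst j; split=> //; case: s Hs C => [|k s] Hs C; first by left.
have ki : k != i by move: Hs; rewrite /nsr /= eq_sym => /andP [].
have [C' [E|Dpe]] := bel_cluster_from_m ki C; last by right.
by move: (bel_D_pos De); lia.
Qed.

Lemma bel_world e : world D e <-> world Dp e \/ e = m.
Proof. by rewrite /world D_spec; tauto. Qed.

Lemma privatizing_Bel : privatizing (bel_paths i P) [set i] D Q.
Proof.
constructor.
- exact: bel_D_pos.
- exact: bel_sink.
- move=> j e f /bel_step_cases [[/(step_src PQp) He _]|[[-> _]|[-> _]]].
  + by rewrite bel_world; tauto.
  + by left.
  + by right; apply/bel_world; right.
- move=> j e f /bel_step_cases
    [[/(step_tgt PQp) Hf _]|[[_ [->|->]]|[_ [->|/(step_tgt PQp) Hf]]]].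
  + by apply/bel_world; left.
  + by left.
  + by apply/bel_world; right.
  + by apply/bel_world; right.
  + by apply/bel_world; left.
- move=> j f /bel_init_step [[-> _]|[_ ->]]; first by rewrite in_set1.
  by move/bel_D_pos; lia.
- by move=> j s [-> _]; rewrite in_set1.
- move=> j s [-> _]; exists m; first by apply/Qi_spec; right; left.
  by apply/D_spec; right.
- case=> [//|j [//|k s]] [-> Ps]; rewrite /nsr /=.
  have -> : i != k by apply: contraNneq iT => ->; exact: (path_agent PQp Ps).
  exact: (path_nsr PQp Ps).
- move=> j s e [-> Ps] [f [/bel_init_step [[_ ->]|[/eqP //]] C]].
  case: s Ps C => [|k s] Ps C; first by rewrite C; apply/D_spec; right.
  have ki : k != i by apply: contraNneq iT => <-; exact: (path_agent PQp Ps).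
  have [C' _] := bel_cluster_from_m ki C.
  by apply/D_spec; left; exact: (path_reach PQp Ps C').
- case=> [|j s] [|k t] e Hs Ht Cs Ct De //=; move: (bel_D_pos De).
  + by rewrite Cs; lia.
  + by rewrite Ct; lia.
  + move=> _; have [-> [[-> Em]|[Cs' Dpe]]] := bel_cluster_nsr Hs Cs De;
    have [-> [[-> Em']|[Ct' Dpe']]] := bel_cluster_nsr Ht Ct De.
    * by [].
    * by case: Dp_m; rewrite -Em.
    * by case: Dp_m; rewrite -Em'.
    * by rewrite (nsr_unique PQp (path_sorted Hs) (path_sorted Ht) Cs' Ct' Dpe).
Qed.

End BelStep.

Lemma union_world_step Pa Ta Da Qa Pb Tb Db Qb (Q : 'I_n -> Z -> Z -> Prop) :
  privatizing Pa Ta Da Qa -> privatizing Pb Tb Db Qb -> (forall e, ~ (Da e /\ Db e)) ->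
  (forall j y g, y <> 0 -> Q j y g -> underQ Qa j y g \/ underQ Qb j y g) ->
  forall j y g, world Da y -> Q j y g -> Qa j y g /\ world Da g.
Proof.
move=> PQa PQb disjD Q_spec j y g Wy Qy.
case: (Q_spec j y g (world_neq0 PQa Wy) Qy) => [[Qay _]|[Qby _]].
  by split; last exact: (step_tgt PQa Qay).
case: (step_src PQb Qby) => [y0|[y1|Dby]].
- by case: (world_neq0 PQa Wy).
- move: Qby; rewrite y1 (sink_step PQb) => ->.
  by split; [apply/(sink_step PQa) | left].
- case: Wy => [y1|Day]; last by case: (disjD y).
  by move: (event_pos PQb Dby); lia.
Qed.

Section AndStep.
Variables (Pp : seq 'I_n -> Prop) (Tp : {set 'I_n}) (Dp : Z -> Prop).
Variables (Qp : 'I_n -> Z -> Z -> Prop).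
Variables (Pt : seq 'I_n -> Prop) (Tt : {set 'I_n}) (Dt : Z -> Prop).
Variables (Qt : 'I_n -> Z -> Z -> Prop).
Variables (D : Z -> Prop) (Q : 'I_n -> Z -> Z -> Prop).
Hypotheses (PQp : privatizing Pp Tp Dp Qp) (PQt : privatizing Pt Tt Dt Qt).
Hypotheses (disjT : [disjoint Tp & Tt]) (disjD : forall e, ~ (Dp e /\ Dt e)).
Hypothesis D_spec : forall e, D e <-> Dp e \/ Dt e.
Hypothesis Q_spec : forall j e f,
  Q j e f <-> underQ Qp j e f \/ underQ Qt j e f
     \/ (e = 0 /\ (Qp j 0 f \/ Qt j 0 f) /\ (Dp f \/ Dt f))
     \/ (e = 0 /\ f = -1 /\ ~ (exists k, (Qp j 0 k \/ Qt j 0 k) /\ (Dp k \/ Dt k))).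

Lemma and_D_pos e : D e -> 0 < e.
Proof. by case/D_spec=> [/(event_pos PQp)|/(event_pos PQt)]. Qed.

Lemma and_world_p j y g : world Dp y -> Q j y g -> Qp j y g /\ world Dp g.
Proof. by apply: (union_world_step PQp PQt disjD) => j' y' g' y0 /Q_spec; tauto. Qed.

Lemma and_world_t j y g : world Dt y -> Q j y g -> Qt j y g /\ world Dt g.
Proof.
have disjD' e : ~ (Dt e /\ Dp e) by move=> [Dte Dpe]; exact: (disjD (conj Dpe Dte)).
by apply: (union_world_step PQt PQp disjD') => j' y' g' y0 /Q_spec; tauto.
Qed.

Lemma and_sink j f : Q j (-1) f <-> f = -1.
Proof.
split; last by move=> ->; apply/Q_spec; left; split; [apply/(sink_step PQp) | lia].
by case/Q_spec=> [[/(sink_step PQp)]|[[/(sink_step PQt)]|]]; lia.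
Qed.

Lemma and_cluster_cases j s e : cluster Z Q 0 (j :: s) e ->
  (e = -1 /\ ~ (exists k, (Qp j 0 k \/ Qt j 0 k) /\ (Dp k \/ Dt k)))
  \/ (j \in Tp /\ cluster Z Qp 0 (j :: s) e /\ world Dp e)
  \/ (j \in Tt /\ cluster Z Qt 0 (j :: s) e /\ world Dt e).
Proof.
case=> f [/Q_spec Qf C].
case: Qf => [[_ [/(_ erefl) //]]|[[_ [/(_ erefl) //]]|[[_ [Qf Df]]|[_ [Ef Nk]]]]].
  have Df' : 0 < f by apply: and_D_pos; apply/D_spec.
  case: Qf => Qf.
    have Dpf : Dp f by case: (step_tgt PQp Qf) => //; lia.
    have [C' We] := cluster_transfer and_world_p (or_intror Dpf) C.
    by right; left; split; [apply: (init_agent PQp Qf) | split=> //; exists f].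
  have Dtf : Dt f by case: (step_tgt PQt Qf) => //; lia.
  have [C' We] := cluster_transfer and_world_t (or_intror Dtf) C.
  by right; right; split; [apply: (init_agent PQt Qf) | split=> //; exists f].
left; split=> //; move: C; rewrite Ef.
by apply: cluster_sink => j' g /and_sink.
Qed.

Lemma and_cluster_D j s e : cluster Z Q 0 (j :: s) e -> D e ->
  cluster Z Qp 0 (j :: s) e /\ Dp e \/ cluster Z Qt 0 (j :: s) e /\ Dt e.
Proof.
move=> C De; have := and_D_pos De.
case: (and_cluster_cases C) => [[E _]|[[_ [C' [E|Dpe]]]|[_ [C' [E|Dte]]]]];
  by [lia | left | right].
Qed.

Lemma and_world e : world D e <-> world Dp e \/ world Dt e.
Proof. by rewrite /world D_spec; tauto. Qed.

Lemma privatizing_And : privatizing (fun s => Pp s \/ Pt s) (Tp :|: Tt) D Q.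
Proof.
constructor.
- exact: and_D_pos.
- exact: and_sink.
- move=> j e f /Q_spec
    [[/(step_src PQp) He _]|[[/(step_src PQt) He _]|[[-> _]|[-> _]]]];
    rewrite ?and_world; by [left | tauto].
- move=> j e f /Q_spec
    [[/(step_tgt PQp) Hf _]|[[/(step_tgt PQt) Hf _]|[[_ [_ Df]]|[_ [-> _]]]]].
  + by apply/and_world; left.
  + by apply/and_world; right.
  + by right; apply/D_spec.
  + by left.
- move=> j f Qf Df; have C : cluster Z Q 0 [:: j] f by exists f.
  case: (and_cluster_cases C) => [[Ef _]|[[jT _]|[jT _]]].
  + by move: (and_D_pos Df); lia.
  + by rewrite inE jT.
  + by rewrite inE jT orbT.
- by move=> j s [/(path_agent PQp)|/(path_agent PQt)] jT; rewrite inE jT ?orbT.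
- move=> j s [/(path_init PQp)|/(path_init PQt)] [k Qk Dk]; exists k;
    rewrite ?Q_spec ?D_spec; tauto.
- by move=> s [/(path_nsr PQp)|/(path_nsr PQt)].
- move=> j s e [Ps|Ps] /and_cluster_cases.
  + case=> [[_ Nk]|[[_ [C _]]|[jT _]]].
    * by case: (path_init PQp Ps) => k Qk Dk; case: Nk; exists k; tauto.
    * by apply/D_spec; left; exact: (path_reach PQp Ps C).
    * by move: (disjointFr disjT (path_agent PQp Ps)); rewrite jT.
  + case=> [[_ Nk]|[[jT _]|[_ [C _]]]].
    * by case: (path_init PQt Ps) => k Qk Dk; case: Nk; exists k; tauto.
    * by move: (disjointFr disjT jT); rewrite (path_agent PQt Ps).
    * by apply/D_spec; right; exact: (path_reach PQt Ps C).
- case=> [|j s] [|k t] e Hs Ht Cs Ct De //=; move: (and_D_pos De).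
  + by rewrite Cs; lia.
  + by rewrite Ct; lia.
  + move=> _.
    case: (and_cluster_D Cs De) => [[Cs' Dpe]|[Cs' Dte]];
    case: (and_cluster_D Ct De) => [[Ct' Dpe']|[Ct' Dte']].
    * exact: (nsr_unique PQp Hs Ht Cs' Ct' Dpe).
    * by case: (disjD (conj Dpe Dte')).
    * by case: (disjD (conj Dpe' Dte)).
    * exact: (nsr_unique PQt Hs Ht Cs' Ct' Dte).
Qed.

End AndStep.

End Privatizing.

Section Construction.
Context {n : nat}.
Local Set Implicit Arguments.
Local Unset Strict Implicit.
Local Open Scope Z_scope.

Lemma rootPath_prop (xi : form n) s : propb xi -> rootPath xi s -> s = [::].
Proof.
move=> + H; elim: H => //= [f g s' _ IH /andP [/IH] | f g s' _ IH /andP [_ /IH]] //.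
Qed.

Lemma rootPath_Bel (i : 'I_n) psi s : rootPath (Bel i psi) s -> bel_paths i (rootPath psi) s.
Proof.
move=> H; inversion H => //=; split=> //; by [constructor | apply: rp_andr].
Qed.

Lemma rootPath_And (f g : form n) s : rootPath (And f g) s -> rootPath f s \/ rootPath g s.
Proof.
move=> H; inversion H; by [left; constructor | left | right].
Qed.

Lemma IsU_nonprop (phi : form n) D Q pre : IsU phi D Q pre -> ~~ propb phi.
Proof.
by elim=> //= psi theta ? ? ? ? ? ? ? ? ? _ IHp *; rewrite negb_and IHp.
Qed.

Lemma IsU_And_l (a b : form n) D Q pre : IsU (And a b) D Q pre -> ~~ propb a.
Proof.
by move=> HU; inversion HU; apply: IsU_nonprop; eassumption.
Qed.

Lemma IsU_pre0 (phi : form n) D Q pre : IsU phi D Q pre -> pre 0 = top.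
Proof. by case. Qed.

Lemma DBI_normal_nonprop (phi : form n) : DBI_normal phi -> ~~ propb phi.
Proof. by elim=> //= f g _ IHf *; rewrite negb_and IHf. Qed.

Lemma DBI_normal_And_inv (a b : form n) : DBI_normal (And a b) ->
  [/\ DBI_normal a, DBI_normal b & [disjoint ta a & ta b]].
Proof.
by move E: (And a b) => f Hn; case: f / Hn E => // f g Nf Ng disj [-> ->].
Qed.

Lemma DBI_normal_Bel_inv i (psi : form n) D Q pre : IsU psi D Q pre ->
  DBI_normal (Bel i psi) -> DBI_normal psi /\ i \notin ta psi.
Proof.
move=> HU; move E: (Bel i psi) => f Hn; case: f / Hn E => //.
- by move=> j xi pxi [_ Exi]; move: (IsU_nonprop HU); rewrite Exi pxi.
- by move=> j xi f pxi _ _ [_ Ef]; move: HU; rewrite Ef => /IsU_And_l; rewrite pxi.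
- by move=> j f Nf jf [-> ->].
Qed.

Lemma DBI_normal_Bel_And_inv i (xi psi : form n) : propb xi -> ~~ propb psi ->
  DBI_normal (Bel i (And xi psi)) -> DBI_normal psi /\ i \notin ta psi.
Proof.
move=> pxi npsi; move E: (Bel i (And xi psi)) => f Hn; case: f / Hn E => //.
- by move=> j a pa [_ Ea]; move: pa; rewrite -Ea /= pxi (negbTE npsi).
- by move=> j a f _ Nf jf [-> _ ->].
- move=> j f Nf _ [_ Ef]; move: Nf; rewrite -Ef => /DBI_normal_And_inv [Nxi _ _].
  by move: (DBI_normal_nonprop Nxi); rewrite pxi.
Qed.

Lemma IsU_privatizing (phi : form n) D Q pre : IsU phi D Q pre -> DBI_normal phi ->
  privatizing (rootPath phi) (ta phi) D Q.
Proof.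
elim=> {phi D Q pre}.
- move=> i xi m D Q pre pxi m_pos D_spec _ _ _ Q_spec Qi_spec _.
  have PQ : privatizing (rootPath xi) set0 (fun _ => False) null_step.
    by apply: privatizing_mono privatizing_null _ => s; apply: rootPath_prop.
  apply: (privatizing_mono _ (@rootPath_Bel i xi)).
  apply: (privatizing_Bel PQ _ m_pos id) => [|e|j e f ji|e f].
  + by rewrite in_set0.
  + by rewrite D_spec; tauto.
  + by rewrite Q_spec // /underQ /null_step; lia.
  + by rewrite Qi_spec /underQ /null_step; lia.
- move=> i psi m Dp Qp prep D Q pre HU IH m_pos Dp_m D_spec _ _ _ _ Q_spec Qi_spec Hn.
  have [Np iT] := DBI_normal_Bel_inv HU Hn.
  apply: (privatizing_mono _ (@rootPath_Bel i psi)).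
  exact: privatizing_Bel (IH Np) iT m_pos Dp_m D_spec Q_spec Qi_spec.
- move=> i xi psi m Dp Qp prep D Q pre pxi HU IH m_pos Dp_m D_spec _ _ _ _ Q_spec Qi_spec Hn.
  have [Np iT] := DBI_normal_Bel_And_inv pxi (IsU_nonprop HU) Hn.
  have PQ : privatizing (rootPath (And xi psi)) (ta psi) Dp Qp.
    apply: privatizing_mono (IH Np) _ => s /rootPath_And [/(rootPath_prop pxi) ->|//].
    exact: rp_root.
  apply: (privatizing_mono _ (@rootPath_Bel i (And xi psi))).
  exact: privatizing_Bel PQ iT m_pos Dp_m D_spec Q_spec Qi_spec.
- move=> psi theta Dp Qp prep Dt Qt pret D Q pre _ IHp _ IHt disjD D_spec _ _ _ _ Q_spec.
  case/DBI_normal_And_inv=> Np Nt disjT.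
  apply: (privatizing_mono _ (@rootPath_And psi theta)).
  exact: privatizing_And (IHp Np) (IHt Nt) disjT disjD D_spec Q_spec.
Qed.

End Construction.

Theorem theorem10 (n : nat) (hn : 1 < n) (phi : form n)
  (D : Z -> Prop) (Q : 'I_n -> Z -> Z -> Prop) (pre : Z -> form n)
  (M : kmodel n) (v : St M) :
  DBI_normal phi -> IsU phi D Q pre ->
  exists H : upd_defined M (Umodel D Q pre) v 0%Z,
    weakly_privatized (upd_model M (Umodel D Q pre) v 0%Z) (upd_point M (Umodel D Q pre) v 0%Z H) phi.
Proof.
move=> Hn HU; have PQ := IsU_privatizing HU Hn.
have H : upd_defined M (Umodel D Q pre) v 0%Z.
  by split; [left | rewrite /= (IsU_pre0 HU) /=; tauto].
exists H => sigma s Psigma Hs s_sigma u [C1 C2]; apply: s_sigma.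
exact: (privatizing_cluster_eq PQ Psigma Hs (cluster_upd_model C1) (cluster_upd_model C2)).
Qed.
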